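(* Consider the $n$-body problem in ${\bf H}^2$ with all masses equal to $m>0$, $n\ge2$, and let $\alpha_i=2\pi i/n$. For every $m>0$ and every $z>1$ there exist $\omega>0$ and $\omega<0$ such that ${\bf q}_i(t)=(\rho\cos(\omega t+\alpha_i),\rho\sin(\omega t+\alpha_i), z)$, $\rho=(z^2-1)^{1/2}$, $i=1,\dots,n$, is a solution of the equations of motion (an elliptic relative equilibrium in which the regular $n$-gon rotates in the plane $z=$ constant).
   Context: The $n$-body problem in ${\bf H}^2$ (Weierstrass model): with the Lorentz inner product ${\bf a}\boxdot{\bf b}=a_xb_x+a_yb_y-a_zb_z$ on $\mathbb R^3$, ${\bf H}^2=\{(x,y,z): x^2+y^2-z^2=-1,\ z>0\}$. Bodies of masses $m_1,\dots,m_n>0$ have positions ${\bf q}_i=(x_i,y_i,z_i)\in{\bf H}^2$ and satisfy $$\ddot{\bf q}_i=\sum_{j\ne i}\frac{m_j[{\bf q}_j+({\bf q}_i\boxdot{\bf q}_j){\bf q}_i]}{[({\bf q}_i\boxdot{\bf q}_j)^2-1]^{3/2}}+(\dot{\bf q}_i\boxdot\dot{\bf q}_i){\bf q}_i,\qquad {\bf q}_i\boxdot{\bf q}_i=-1,\ \ {\bf q}_i\boxdot\dot{\bf q}_i=0,$$ $i=1,\dots,n$, defined only for collisionless configurations (${\bf q}_i\ne{\bf q}_j$ for $i\ne j$). *)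

From Stdlib Require Import Reals Lra List.
Open Scope R_scope.

Record V3 : Type := mkV3 { vx : R; vy : R; vz : R }.

Definition vadd (a b : V3) : V3 := mkV3 (vx a + vx b) (vy a + vy b) (vz a + vz b).
Definition vscale (c : R) (a : V3) : V3 := mkV3 (c * vx a) (c * vy a) (c * vz a).
Definition vzero : V3 := mkV3 0 0 0.

Definition lor (a b : V3) : R := vx a * vx b + vy a * vy b - vz a * vz b.

(* the hyperbolic plane H^2 (Weierstrass model) *)
Definition inH2 (a : V3) : Prop := lor a a = -1 /\ vz a > 0.

Definition vderiv (f : R -> V3) (t : R) (v : V3) : Prop :=
  derivable_pt_lim (fun s => vx (f s)) t (vx v) /\
  derivable_pt_lim (fun s => vy (f s)) t (vy v) /\
  derivable_pt_lim (fun s => vz (f s)) t (vz v).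

Definition vsum_others (n i : nat) (F : nat -> V3) : V3 :=
  fold_right (fun j acc => if Nat.eq_dec j i then acc else vadd (F j) acc)
             vzero (seq 1 n).

Definition force (n : nat) (m : nat -> R) (q : nat -> V3) (v : V3) (i : nat) : V3 :=
  vadd (vsum_others n i (fun j =>
          vscale (m j / Rpower ((lor (q i) (q j))^2 - 1) (3/2))
                 (vadd (q j) (vscale (lor (q i) (q j)) (q i)))))
       (vscale (lor v v) (q i)).

Definition is_solution (n : nat) (m : nat -> R) (q : nat -> R -> V3) : Prop :=
  exists (v a : nat -> R -> V3),
    forall t : R,
      (forall i j, (1 <= i <= n)%nat -> (1 <= j <= n)%nat -> i <> j -> q i t <> q j t) /\
      (forall i, (1 <= i <= n)%nat ->
         vderiv (q i) t (v i t) /\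
         vderiv (v i) t (a i t) /\
         inH2 (q i t) /\
         lor (q i t) (v i t) = 0 /\
         a i t = force n m (fun j => q j t) (v i t) i).

Definition ngon_orbit (n : nat) (z omega : R) (i : nat) (t : R) : V3 :=
  let rho := sqrt (z^2 - 1) in
  let alpha := 2 * PI * INR i / INR n in
  mkV3 (rho * cos (omega * t + alpha)) (rho * sin (omega * t + alpha)) z.

From Stdlib Require Import Reals Lra Lia List.
From Coquelicot Require Import Coquelicot.
Open Scope R_scope.

(* Write theta_i = w t + 2 pi i / n for the polar angle of vertex i and
   rho = sqrt (z^2 - 1) for the radius of the circle.  The Lorentz product of two
   vertices is (z^2 - 1) cos (theta_j - theta_i) - z^2, so the attraction of vertex j
   on vertex i is a combination of a radial and a tangential vector at vertex i
   whose coefficients depend only on the offset j - i, as n-periodic functions.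
   Summed over a full period, the tangential coefficients cancel (they are odd) and
   the radial ones give a positive constant A independent of i.  The constraint term
   (v . v) q_i then matches the centripetal acceleration exactly when w^2 = A, so
   w = sqrt A and w = - sqrt A give the two relative equilibria. *)

Definition rsum (l : list nat) (f : nat -> R) : R :=
  fold_right (fun j acc => f j + acc) 0 l.

Lemma rsum_app l1 l2 f : rsum (l1 ++ l2) f = rsum l1 f + rsum l2 f.
Proof. induction l1 as [|a l1 IH]; simpl; [lra|]. rewrite IH; lra. Qed.

Lemma rsum_ext l f g : (forall j, f j = g j) -> rsum l f = rsum l g.
Proof. intros H; induction l as [|a l IH]; simpl; [|rewrite H, IH]; reflexivity. Qed.

Lemma rsum_opp l f : rsum l (fun j => - f j) = - rsum l f.
Proof. induction l as [|a l IH]; simpl; [lra|]. rewrite IH; lra. Qed.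

Lemma rsum_nonneg l f : (forall j, 0 <= f j) -> 0 <= rsum l f.
Proof. intros H; induction l as [|a l IH]; simpl; [lra|]. specialize (H a); lra. Qed.

Lemma rsum_shift_index a len f :
  rsum (seq (S a) len) f = rsum (seq a len) (fun j => f (S j)).
Proof.
  rewrite <- seq_shift. induction (seq a len) as [|b l IH]; simpl; [|rewrite IH]; reflexivity.
Qed.

Lemma rsum_seq_first a len f :
  rsum (seq a (S len)) f = f a + rsum (seq a len) (fun j => f (S j)).
Proof. rewrite <- rsum_shift_index. reflexivity. Qed.

Lemma rsum_seq_last a len f :
  rsum (seq a (S len)) f = rsum (seq a len) f + f (a + len)%nat.
Proof. rewrite seq_S, rsum_app. simpl. lra. Qed.

Lemma rsum_reflect n (g : R -> R) :
  rsum (seq 1 n) (fun j => g (INR j)) = rsum (seq 1 n) (fun j => g (INR n + 1 - INR j)).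
Proof.
  induction n as [|n IH]; [reflexivity|].
  rewrite rsum_seq_last, IH, rsum_seq_first.
  replace (INR (1 + n)) with (INR (S n) + 1 - INR 1) by (rewrite !S_INR; simpl; ring).
  rewrite (rsum_ext _ (fun j => g (INR (S n) + 1 - INR (S j))) (fun j => g (INR n + 1 - INR j)))
    by (intro j; f_equal; rewrite !S_INR; ring).
  lra.
Qed.

Definition cyc_sum (n : nat) (h : R -> R) (c : R) : R :=
  rsum (seq 1 n) (fun j => h (INR j + c)).

Section CyclicSums.
Variables (n : nat) (h : R -> R).
Hypothesis h_periodic : forall x, h (x + INR n) = h x.

(* Shifting the offset by one exchanges the first term h (1 + c) for the equal term
   h (n + 1 + c). *)
Lemma cyc_sum_shift1 c : cyc_sum n h (c + 1) = cyc_sum n h c.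
Proof.
  unfold cyc_sum. destruct n as [|k]; [reflexivity|].
  rewrite (rsum_ext _ (fun j => h (INR j + (c + 1))) (fun j => h (INR (S j) + c)))
    by (intro j; f_equal; rewrite S_INR; ring).
  rewrite <- (rsum_shift_index 1 (S k) (fun j => h (INR j + c))), rsum_seq_last, rsum_seq_first.
  rewrite <- (rsum_shift_index 1 k (fun j => h (INR j + c))).
  change (1 + k)%nat with (S k). change (2 + k)%nat with (S (S k)).
  replace (INR (S (S k)) + c) with (INR 1 + c + INR (S k)) by (rewrite (S_INR (S k)); simpl; ring).
  rewrite h_periodic. lra.
Qed.

Lemma cyc_sum_shift c k : cyc_sum n h (c - INR k) = cyc_sum n h c.
Proof.
  induction k as [|k IH]; [f_equal; simpl; ring|].
  rewrite <- IH, <- cyc_sum_shift1. f_equal. rewrite S_INR. ring.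
Qed.

Lemma cyc_sum_from_vertex k :
  rsum (seq 1 n) (fun j => h (INR j - INR k)) = cyc_sum n h 0.
Proof.
  rewrite <- (cyc_sum_shift 0 k). unfold cyc_sum.
  apply rsum_ext; intro j. f_equal. ring.
Qed.

(* An odd n-periodic function sums to zero over a full period, by pairing j with n - j. *)
Lemma cyc_sum_odd : (forall x, h (- x) = - h x) -> cyc_sum n h 0 = 0.
Proof.
  intros h_odd.
  assert (Hanti : cyc_sum n h 0 = - cyc_sum n h (0 - INR 1)).
  { unfold cyc_sum. rewrite (rsum_reflect n (fun x => h (x + 0))), <- rsum_opp.
    apply rsum_ext; intro j.
    replace (INR n + 1 - INR j + 0) with (- (INR j + (0 - INR 1)) + INR n) by (simpl; ring).
    rewrite h_periodic, h_odd. reflexivity. }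
  rewrite cyc_sum_shift in Hanti. lra.
Qed.
End CyclicSums.

Definition vsum (l : list nat) (F : nat -> V3) : V3 :=
  fold_right (fun j acc => vadd (F j) acc) vzero l.

Lemma vadd_zero_l a : vadd vzero a = a.
Proof. destruct a; unfold vadd, vzero; simpl; f_equal; ring. Qed.

Lemma vsum_others_full n i F G :
  (forall j, F j = G j) -> G i = vzero -> vsum_others n i F = vsum (seq 1 n) G.
Proof.
  intros HFG Hi. unfold vsum_others, vsum.
  induction (seq 1 n) as [|j l IH]; simpl; [reflexivity|].
  destruct (Nat.eq_dec j i) as [->|_]; rewrite IH; [rewrite Hi, vadd_zero_l | rewrite HFG];
    reflexivity.
Qed.

Lemma vsum_combination l (a b : nat -> R) P Q :
  vsum l (fun j => vadd (vscale (a j) P) (vscale (b j) Q))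
  = vadd (vscale (rsum l a) P) (vscale (rsum l b) Q).
Proof.
  induction l as [|j l IH]; simpl; rewrite ?IH; unfold vadd, vscale, vzero; simpl; f_equal; ring.
Qed.

Definition angle (n : nat) (x : R) : R := 2 * PI * x / INR n.

Lemma angle_zero n : angle n 0 = 0.
Proof. unfold angle, Rdiv. ring. Qed.

Lemma angle_diff n x y : angle n x - angle n y = angle n (x - y).
Proof. unfold angle, Rdiv. ring. Qed.

Lemma angle_opp n x : angle n (- x) = - angle n x.
Proof. unfold angle, Rdiv. ring. Qed.

Lemma angle_periodic n x : (n <> 0)%nat -> angle n (x + INR n) = angle n x + 2 * PI.
Proof. intros Hn. unfold angle. field. apply not_0_INR, Hn. Qed.

Lemma angle_in_period n k : (0 < k < n)%nat -> 0 < angle n (INR k) < 2 * PI.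
Proof.
  intros Hk. unfold angle.
  assert (0 < INR k) by (apply lt_0_INR; lia).
  assert (INR k < INR n) by (apply lt_INR; lia).
  pose proof PI_RGT_0.
  split.
  - apply Rdiv_lt_0_compat; nra.
  - apply Rmult_lt_reg_r with (INR n); [lra|].
    unfold Rdiv. rewrite Rmult_assoc, Rinv_l by lra. nra.
Qed.

Lemma cos_lt_1 x : 0 < x < 2 * PI -> cos x < 1.
Proof.
  intros Hx. replace x with (2 * (x / 2)) by field. rewrite cos_2a_sin.
  assert (0 < sin (x / 2)) by (apply sin_gt_0; lra). nra.
Qed.

Lemma cos_add_2PI x : cos (x + 2 * PI) = cos x.
Proof. rewrite cos_plus, cos_2PI, sin_2PI. ring. Qed.

Lemma sin_add_2PI x : sin (x + 2 * PI) = sin x.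
Proof. rewrite sin_plus, cos_2PI, sin_2PI. ring. Qed.

(* Strength of the attraction between two bodies on the circle at height z whose
   polar angles differ by d: m / ((q_i . q_j)^2 - 1)^(3/2). *)
Definition coupling (m z d : R) : R :=
  m / Rpower (((z^2 - 1) * cos d - z^2)^2 - 1) (3/2).

Definition radial_weight (m z : R) (n : nat) (x : R) : R :=
  coupling m z (angle n x) * (1 - cos (angle n x)).
Definition tangential_weight (m z : R) (n : nat) (x : R) : R :=
  coupling m z (angle n x) * sin (angle n x).

Lemma coupling_pos m z d : 0 < m -> 0 < coupling m z d.
Proof. intros Hm. unfold coupling, Rpower. apply Rdiv_lt_0_compat; [exact Hm | apply exp_pos]. Qed.

Lemma radial_weight_nonneg m z n x : 0 < m -> 0 <= radial_weight m z n x.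
Proof.
  intros Hm. unfold radial_weight. pose proof (COS_bound (angle n x)).
  pose proof (coupling_pos m z (angle n x) Hm). nra.
Qed.

Lemma radial_weight_periodic m z n x :
  (n <> 0)%nat -> radial_weight m z n (x + INR n) = radial_weight m z n x.
Proof.
  intros Hn. unfold radial_weight, coupling. rewrite angle_periodic, cos_add_2PI by exact Hn.
  reflexivity.
Qed.

Lemma tangential_weight_periodic m z n x :
  (n <> 0)%nat -> tangential_weight m z n (x + INR n) = tangential_weight m z n x.
Proof.
  intros Hn. unfold tangential_weight, coupling.
  rewrite angle_periodic, cos_add_2PI, sin_add_2PI by exact Hn. reflexivity.
Qed.

Lemma tangential_weight_odd m z n x : tangential_weight m z n (- x) = - tangential_weight m z n x.
Proof. unfold tangential_weight, coupling. rewrite angle_opp, cos_neg, sin_neg. ring. Qed.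

Lemma radial_weight_zero m z n : radial_weight m z n 0 = 0.
Proof. unfold radial_weight. rewrite angle_zero, cos_0. ring. Qed.

Lemma tangential_weight_zero m z n : tangential_weight m z n 0 = 0.
Proof. unfold tangential_weight. rewrite angle_zero, sin_0. ring. Qed.

Definition ngon_freq_sq (m z : R) (n : nat) : R := cyc_sum n (radial_weight m z n) 0.

(* Positive, since the neighbouring vertex j = 1 contributes a positive radial weight
   and all other weights are nonnegative. *)
Lemma ngon_freq_sq_pos m z n : 0 < m -> (2 <= n)%nat -> 0 < ngon_freq_sq m z n.
Proof.
  intros Hm Hn. unfold ngon_freq_sq, cyc_sum. destruct n as [|k]; [lia|].
  rewrite rsum_seq_first.
  assert (0 <= rsum (seq 1 k) (fun j => radial_weight m z (S k) (INR (S j) + 0)))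
    by (apply rsum_nonneg; intro; apply radial_weight_nonneg, Hm).
  assert (0 < radial_weight m z (S k) (INR 1 + 0)); [|lra].
  rewrite Rplus_0_r. unfold radial_weight.
  pose proof (cos_lt_1 _ (angle_in_period (S k) 1 ltac:(lia))).
  pose proof (coupling_pos m z (angle (S k) (INR 1)) Hm). nra.
Qed.

Definition radius (z : R) : R := sqrt (z^2 - 1).

Lemma radius_sq z : 1 < z -> radius z * radius z = z^2 - 1.
Proof. intros Hz. apply sqrt_sqrt. nra. Qed.

Section RotatingNgon.
Variables (n : nat) (z w : R).

Definition phase (i : nat) (t : R) : R := w * t + angle n (INR i).

Lemma ngon_orbit_eq i t :
  ngon_orbit n z w i t = mkV3 (radius z * cos (phase i t)) (radius z * sin (phase i t)) z.
Proof. reflexivity. Qed.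

Definition ngon_velocity (i : nat) (t : R) : V3 :=
  mkV3 (- (radius z * w) * sin (phase i t)) (radius z * w * cos (phase i t)) 0.
Definition ngon_acceleration (i : nat) (t : R) : V3 :=
  mkV3 (- (w^2 * radius z) * cos (phase i t)) (- (w^2 * radius z) * sin (phase i t)) 0.

Lemma ngon_velocity_deriv i t : vderiv (fun s => ngon_orbit n z w i s) t (ngon_velocity i t).
Proof.
  unfold vderiv, ngon_orbit, ngon_velocity, phase; cbv zeta; cbn [vx vy vz].
  change (sqrt (z^2 - 1)) with (radius z).
  repeat split; apply is_derive_Reals; auto_derive; trivial; unfold angle; ring.
Qed.

Lemma ngon_acceleration_deriv i t : vderiv (ngon_velocity i) t (ngon_acceleration i t).
Proof.
  unfold vderiv, ngon_velocity, ngon_acceleration, phase; cbn [vx vy vz].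
  repeat split; apply is_derive_Reals; auto_derive; trivial; ring.
Qed.

Lemma ngon_velocity_tangent i t : lor (ngon_orbit n z w i t) (ngon_velocity i t) = 0.
Proof. rewrite ngon_orbit_eq. unfold lor, ngon_velocity; cbn [vx vy vz]. ring. Qed.

Section OnTheCircle.
Hypothesis z_gt_1 : 1 < z.

Lemma ngon_lor i j t :
  lor (ngon_orbit n z w i t) (ngon_orbit n z w j t)
  = (z^2 - 1) * cos (angle n (INR j - INR i)) - z^2.
Proof.
  rewrite !ngon_orbit_eq. unfold lor; cbn [vx vy vz].
  rewrite <- angle_diff.
  replace (angle n (INR j) - angle n (INR i)) with (phase j t - phase i t) by (unfold phase; ring).
  rewrite cos_minus, <- (radius_sq z z_gt_1). ring.
Qed.

Lemma ngon_in_H2 i t : inH2 (ngon_orbit n z w i t).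
Proof.
  split.
  - rewrite ngon_lor, Rminus_diag, angle_zero, cos_0. ring.
  - simpl. lra.
Qed.

Lemma ngon_velocity_sq i t : lor (ngon_velocity i t) (ngon_velocity i t) = w^2 * (z^2 - 1).
Proof.
  unfold lor, ngon_velocity; cbn [vx vy vz].
  replace (w^2 * (z^2 - 1))
    with (w^2 * (radius z * radius z) * ((sin (phase i t))² + (cos (phase i t))²))
    by (rewrite sin2_cos2, radius_sq by exact z_gt_1; ring).
  unfold Rsqr. ring.
Qed.

Lemma cos_vertex_offset_lt_1 i j :
  (1 <= i <= n)%nat -> (1 <= j <= n)%nat -> i <> j -> cos (angle n (INR j - INR i)) < 1.
Proof.
  intros Hi Hj Hij. destruct (Nat.lt_gt_cases i j) as [[Hlt|Hlt] _]; [exact Hij| |].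
  - rewrite <- minus_INR by lia. apply cos_lt_1, angle_in_period. lia.
  - replace (INR j - INR i) with (- INR (i - j)) by (rewrite minus_INR by lia; ring).
    rewrite angle_opp, cos_neg. apply cos_lt_1, angle_in_period. lia.
Qed.

(* The configuration is collisionless: equal vertices would have Lorentz product -1,
   forcing the cosine of their angle offset to be 1. *)
Lemma ngon_vertices_distinct i j t :
  (1 <= i <= n)%nat -> (1 <= j <= n)%nat -> i <> j ->
  ngon_orbit n z w i t <> ngon_orbit n z w j t.
Proof.
  intros Hi Hj Hij Heq.
  assert (Hlor : lor (ngon_orbit n z w i t) (ngon_orbit n z w j t)
               = lor (ngon_orbit n z w i t) (ngon_orbit n z w i t)) by (rewrite Heq; reflexivity).
  rewrite !ngon_lor, Rminus_diag, angle_zero, cos_0 in Hlor.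
  pose proof (cos_vertex_offset_lt_1 i j Hi Hj Hij).
  assert (0 < z^2 - 1) by nra. nra.
Qed.

Definition radial_dir (i : nat) (t : R) : V3 :=
  mkV3 (- (radius z * z^2 * cos (phase i t))) (- (radius z * z^2 * sin (phase i t)))
       (- (z * (z^2 - 1))).
Definition tangential_dir (i : nat) (t : R) : V3 :=
  mkV3 (- (radius z * sin (phase i t))) (radius z * cos (phase i t)) 0.

Lemma ngon_pair_attraction m i j t :
  let q k := ngon_orbit n z w k t in
  vscale (m / Rpower ((lor (q i) (q j))^2 - 1) (3/2))
         (vadd (q j) (vscale (lor (q i) (q j)) (q i)))
  = vadd (vscale (radial_weight m z n (INR j - INR i)) (radial_dir i t))
         (vscale (tangential_weight m z n (INR j - INR i)) (tangential_dir i t)).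
Proof.
  intros q. unfold q. rewrite ngon_lor, !ngon_orbit_eq.
  unfold radial_weight, tangential_weight, coupling, radial_dir, tangential_dir, vscale, vadd.
  cbn [vx vy vz].
  replace (phase j t) with (phase i t + angle n (INR j - INR i))
    by (unfold phase; rewrite <- angle_diff; ring).
  rewrite cos_plus, sin_plus. f_equal; ring.
Qed.

(* The balance of forces: the tangential attractions cancel by symmetry, and the
   radial attraction together with the constraint term produces the centripetal
   acceleration exactly when w^2 is the total radial weight. *)
Lemma ngon_equation_of_motion m i t :
  (n <> 0)%nat -> w * w = ngon_freq_sq m z n ->
  ngon_acceleration i t
  = force n (fun _ => m) (fun j => ngon_orbit n z w j t) (ngon_velocity i t) i.
Proof.
  intros Hn Hw. unfold force.
  rewrite (vsum_others_full n i _ _ (fun j => ngon_pair_attraction m i j t)), vsum_combination.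
  2:{ rewrite Rminus_diag, radial_weight_zero, tangential_weight_zero.
      unfold vadd, vscale, vzero; cbn [vx vy vz]; f_equal; ring. }
  rewrite (cyc_sum_from_vertex n _ (fun x => radial_weight_periodic m z n x Hn)),
          (cyc_sum_from_vertex n _ (fun x => tangential_weight_periodic m z n x Hn)),
          (cyc_sum_odd n _ (fun x => tangential_weight_periodic m z n x Hn)
                           (tangential_weight_odd m z n)).
  fold (ngon_freq_sq m z n). rewrite <- Hw, ngon_velocity_sq, ngon_orbit_eq.
  unfold ngon_acceleration, radial_dir, tangential_dir, vadd, vscale; cbn [vx vy vz].
  f_equal; ring.
Qed.
End OnTheCircle.
End RotatingNgon.

Lemma ngon_is_solution n m z w :
  (2 <= n)%nat -> 1 < z -> w * w = ngon_freq_sq m z n ->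
  is_solution n (fun _ => m) (ngon_orbit n z w).
Proof.
  intros Hn Hz Hw.
  exists (ngon_velocity n z w), (ngon_acceleration n z w). intros t. split.
  - intros i j Hi Hj Hij. exact (ngon_vertices_distinct n z w Hz i j t Hi Hj Hij).
  - intros i Hi. split; [|split; [|split; [|split]]].
    + apply ngon_velocity_deriv.
    + apply ngon_acceleration_deriv.
    + exact (ngon_in_H2 n z w Hz i t).
    + apply ngon_velocity_tangent.
    + apply ngon_equation_of_motion; [exact Hz | lia | exact Hw].
Qed.

Theorem mainTheorem13 (n : nat) (m z : R) :
  (2 <= n)%nat -> 0 < m -> 1 < z ->
  (exists omega : R, omega > 0 /\ is_solution n (fun _ => m) (ngon_orbit n z omega)) /\
  (exists omega : R, omega < 0 /\ is_solution n (fun _ => m) (ngon_orbit n z omega)).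
Proof.
  intros Hn Hm Hz.
  set (A := ngon_freq_sq m z n).
  assert (HA : 0 < A) by exact (ngon_freq_sq_pos m z n Hm Hn).
  assert (Hsq : sqrt A * sqrt A = A) by (apply sqrt_sqrt; lra).
  pose proof (sqrt_lt_R0 A HA) as Hpos.
  split.
  - exists (sqrt A). split; [lra|]. apply ngon_is_solution; [exact Hn | exact Hz | exact Hsq].
  - exists (- sqrt A). split; [lra|]. apply ngon_is_solution; [exact Hn | exact Hz |].
    transitivity (sqrt A * sqrt A); [ring | exact Hsq].
Qed.
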